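(* Let $D=(\mathcal{S}_D,\mathcal{P}_D)$ be an abstract storage device (ASD). (i) $D$ is state-minimal if and only if for every pair of distinct states $s,s'\in\mathcal{S}_D$ there exists a partition $\pi\in\mathcal{P}_D$ with $s\not\equiv_\pi s'$; equivalently, if and only if $\bigwedge_{\pi\in\mathcal{P}_D}\pi=\mathrm{id}_{\mathcal{S}_D}$. (ii) $D$ is partition-minimal if and only if $\mathcal{P}_D$ is an antichain with respect to refinement. Furthermore, for every ASD $D$ there exists a minimal ASD $D'$ with $D'\equiv D$.
   Context: A partition $\pi$ of a set $\mathcal{S}$ is a family of disjoint subsets (blocks) with union $\mathcal{S}$; $s\equiv_\pi t$ means $s,t$ lie in the same block. $\pi$ refines $\pi'$ ($\pi\preceq\pi'$) if every block of $\pi$ is contained in a block of $\pi'$; $\wedge$ denotes the meet (the partition into nonempty pairwise intersections of blocks), and $\mathrm{id}_{\mathcal{S}}=\{\{s\}:s\in\mathcal{S}\}$. A set of partitions is an antichain if no two distinct members satisfy $\pi\preceq\pi'$. For $\phi:\mathcal{S}\to\mathcal{S}'$ and a partition $\pi$ of $\mathcal{S}'$, $\pi\circ\phi$ is the partition of $\mathcal{S}$ with $x\equiv_{\pi\circ\phi}y$ iff $\phi(x)\equiv_\pi\phi(y)$. An ASD is a pair $D=(\mathcal{S}_D,\mathcal{P}_D)$ where $\mathcal{S}_D$ is a set (state space) and $\mathcal{P}_D$ a family of partitions of $\mathcal{S}_D$; throughout, state spaces and partition sets are finite. $D$ is reducible to $D'$, written $D\le D'$, if there are functions $\phi:\mathcal{S}_D\to\mathcal{S}_{D'}$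 and $\alpha:\mathcal{P}_D\to\mathcal{P}_{D'}$ with $\alpha(\pi)\circ\phi\preceq\pi$ for all $\pi\in\mathcal{P}_D$. $D\equiv D'$ means $D\le D'$ and $D'\le D$. $D$ is state-minimal if no $D'\equiv D$ has $|\mathcal{S}_{D'}|<|\mathcal{S}_D|$, partition-minimal if no $D'\equiv D$ has $|\mathcal{P}_{D'}|<|\mathcal{P}_D|$, and minimal if both. *)

From mathcomp Require Import all_boot.
Set Implicit Arguments. Unset Strict Implicit. Unset Printing Implicit Defensive.

Definition same_block (T : finType) (pi : {set {set T}}) (s t : T) : bool :=
  [exists B in pi, (s \in B) && (t \in B)].

Definition refines (T : finType) (pi pi' : {set {set T}}) : Prop :=
  forall B, B \in pi -> exists2 B', B' \in pi' & B \subset B'.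

Definition pullback (T T' : finType) (pi : {set {set T'}}) (phi : T -> T')
  : {set {set T}} :=
  [set [set y | same_block pi (phi x) (phi y)] | x : T].

(* meet of a family of partitions: blocks are the nonempty intersections
   of one block from each partition, i.e. the classes of the relation
   "same block in every member" *)
Definition meet_family (T : finType) (P : {set {set {set T}}}) : {set {set T}} :=
  [set [set y | [forall pi in P, same_block pi x y]] | x : T].

Definition id_part (T : finType) : {set {set T}} := [set [set x] | x : T].

Definition antichain (T : finType) (P : {set {set {set T}}}) : Prop :=
  forall pi pi', pi \in P -> pi' \in P -> refines pi pi' -> pi = pi'.

Record ASD := mkASD {
  states : finType;
  parts : {set {set {set states}}};
  parts_partition : forall pi, pi \in parts -> partition pi [set: states]
}.

Definition reducible (D D' : ASD) : Prop :=
  exists (phi : states D -> states D')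
         (alpha : {set {set states D}} -> {set {set states D'}}),
    forall pi, pi \in parts D ->
      alpha pi \in parts D' /\ refines (pullback (alpha pi) phi) pi.

Definition asd_equiv (D D' : ASD) : Prop := reducible D D' /\ reducible D' D.

Definition state_minimal (D : ASD) : Prop :=
  ~ exists D' : ASD, asd_equiv D' D /\ #|states D'| < #|states D|.

Definition partition_minimal (D : ASD) : Prop :=
  ~ exists D' : ASD, asd_equiv D' D /\ #|parts D'| < #|parts D|.

Definition minimal (D : ASD) : Prop := state_minimal D /\ partition_minimal D.

From mathcomp Require Import all_boot zify.
From Stdlib Require Import Classical Wf_nat.
Set Implicit Arguments. Unset Strict Implicit. Unset Printing Implicit Defensive.

(* Reducibility only sees the equivalence relations of the partitions: D <= D'
   via (phi, alpha) means that states whose phi-images share a block of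
   alpha(pi) already share a block of pi.  If the partitions separate states,
   the state map of every reduction out of D is injective, so no equivalent
   device has fewer states; two states that no partition separates can be
   merged.  If one partition of D refines another, the coarser one can be
   dropped.  Conversely, if D <= D' <= D via (phi, alpha) and (psi, beta),
   then (f, g) = (psi phi, beta alpha) is a self-reduction of D, and a power
   of it with idempotent components satisfies g^k(pi) <= pi, hence fixes
   every member of an antichain; this makes alpha injective on partitions.
   A minimal equivalent device is obtained by minimising the number of
   states and then, among devices with that many states, the number of
   partitions. *)

Section Partitions.
Variable T : finType.
Implicit Types (A B P : {set {set T}}) (x y : T).

Lemma same_blockE P x y : partition P [set: T] ->
  same_block P x y = (y \in pblock P x).
Proof.
case/and3P=> /eqP coverP tiP _; have Px : x \in cover P by rewrite coverP inE.
apply/exists_inP/idP => [[B PB /andP [xB yB]] | yPx].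
  by rewrite (def_pblock tiP PB xB).
by exists (pblock P x); rewrite ?pblock_mem // mem_pblock Px.
Qed.

Lemma same_block_pblock P x y : partition P [set: T] ->
  same_block P x y = (pblock P x == pblock P y).
Proof.
move=> partP; have [/eqP coverP tiP _] := and3P partP.
by rewrite same_blockE // eq_pblock // coverP inE.
Qed.

Lemma same_block_refl P x : partition P [set: T] -> same_block P x x.
Proof. by move=> partP; rewrite same_block_pblock. Qed.

Lemma refines_same_block A B : refines A B ->
  forall x y, same_block A x y -> same_block B x y.
Proof.
move=> AB x y /exists_inP [C AC /andP [xC yC]]; have [C' BC' CC'] := AB C AC.
by apply/exists_inP; exists C'; rewrite ?(subsetP CC').
Qed.

Lemma refines_same_blockP A B : partition A [set: T] -> partition B [set: T] ->
  refines A B <-> (forall x y, same_block A x y -> same_block B x y).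
Proof.
move=> partA partB; split; first exact: refines_same_block.
move=> AB C AC; have /set0Pn [x xC] : C != set0.
  by case/and3P: partA => _ _; apply: contraNneq => <-.
exists (pblock B x).
  by apply: pblock_mem; case/and3P: partB => /eqP -> _ _; rewrite inE.
apply/subsetP => y yC; rewrite -same_blockE //; apply: AB.
by apply/exists_inP; exists C; rewrite ?xC ?yC.
Qed.

End Partitions.

Section Pullback.
Variables (T T' : finType) (pi : {set {set T'}}) (phi : T -> T').
Hypothesis partition_pi : partition pi [set: T'].

Lemma pullbackE : pullback pi phi = preim_partition (pblock pi \o phi) [set: T].
Proof.
apply/setP => B; apply/imsetP/imsetP => -[x _ ->]; exists x => //;
  by apply/setP => y; rewrite !inE same_block_pblock.
Qed.

Lemma pullback_partition : partition (pullback pi phi) [set: T].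
Proof. by rewrite pullbackE; apply: preim_partitionP. Qed.

Lemma same_block_pullback x y :
  same_block (pullback pi phi) x y = same_block pi (phi x) (phi y).
Proof.
rewrite same_blockE ?pullback_partition // pullbackE same_block_pblock //.
by rewrite pblock_equivalence_partition ?inE //; split=> // /eqP ->.
Qed.

End Pullback.

Lemma idempotent_iter (X : Type) (h : X -> X) :
  idempotent_fun h -> forall n, iter n.+1 h =1 h.
Proof. by move=> idem_h; elim=> // n IHn x; rewrite iterS IHn; apply: idem_h. Qed.

Lemma exists_idempotent_iter (X : finType) (F : X -> X) :
  exists2 k, 0 < k & idempotent_fun (iter k F).
Proof.
pose G (i : 'I_#|{ffun X -> X}|.+1) := [ffun x => iter i F x].
have /injectivePn [i [j neq_ij eq_G]] : ~~ injectiveb G.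
  by apply/negP => /injectiveP /leq_card; rewrite card_ord ltnn.
wlog lt_ij : i j {neq_ij} eq_G / i < j.
  move=> wlog; have [lt_ij | lt_ji | /val_inj eq_ij] := ltngtP i j.
  - exact: wlog lt_ij.
  - exact: wlog (esym eq_G) lt_ji.
  - by move: neq_ij; rewrite eq_ij eqxx.
have eq_iter x : iter i F x = iter j F x by have /ffunP/(_ x) := eq_G; rewrite !ffunE.
have periodic n x : i <= n -> iter (n + (j - i)) F x = iter n F x.
  move=> le_in; have -> : n + (j - i) = (n - i) + j by lia.
  by rewrite iterD -eq_iter -iterD subnK.
have periodic_mul m n x : i <= n -> iter (n + m * (j - i)) F x = iter n F x.
  elim: m n => [|m IHm] n le_in; first by rewrite addn0.
  by rewrite mulSn addnA IHm ?periodic // (leq_trans le_in) ?leq_addr.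
(* From i on, iterating F is periodic with period j - i; take a multiple of the
   period that is at least i. *)
have pos_ji : 0 < j - i by rewrite subn_gt0.
exists (i.+1 * (j - i)); first by rewrite muln_gt0.
by move=> x /=; rewrite -iterD periodic_mul // ltnW // leq_pmulr.
Qed.

Lemma idempotent_iter_mul (X : Type) (F : X -> X) k m :
  idempotent_fun (iter k F) -> 0 < m -> idempotent_fun (iter (m * k) F).
Proof.
case: m => // m idem_k _ x /=.
by rewrite !iterM !idempotent_iter //; apply: idem_k.
Qed.

Lemma exists_minimizer (X : Type) (Q : X -> Prop) (m : X -> nat) :
  (exists x, Q x) -> exists x, Q x /\ forall y, Q y -> m x <= m y.
Proof.
pose P n := exists x, Q x /\ m x = n.
move=> [x0 Qx0]; have P_dec n : P n \/ ~ P n by apply: classic.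
have inh_P : exists n, P n by exists (m x0), x0.
have [n [[[x [Qx <-]] min_n] _]] :=
  dec_inh_nat_subset_has_unique_least_element P P_dec inh_P.
by exists x; split=> // y Qy; apply/leP/min_n; exists y.
Qed.

Definition reduction (D D' : ASD) (phi : states D -> states D')
    (alpha : {set {set states D}} -> {set {set states D'}}) : Prop :=
  forall pi, pi \in parts D -> alpha pi \in parts D' /\
    forall x y, same_block (alpha pi) (phi x) (phi y) -> same_block pi x y.

Lemma reducibleP (D D' : ASD) :
  reducible D D' <-> exists phi alpha, @reduction D D' phi alpha.
Proof.
split=> -[phi [alpha red]]; exists phi, alpha => pi Dpi; have [D'api AB] := red pi Dpi;
  have partD := parts_partition Dpi; have partD' := parts_partition D'api.
- split=> // x y; rewrite -same_block_pullback //.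
  by apply: refines_same_block.
- split=> //; apply/refines_same_blockP; rewrite ?pullback_partition // => x y.
  by rewrite same_block_pullback //; apply: AB.
Qed.

Section Reductions.
Variables D1 D2 D3 : ASD.

Lemma reduction_id : @reduction D1 D1 id id.
Proof. by move=> pi Dpi; split. Qed.

Lemma reduction_comp phi alpha psi beta :
  @reduction D1 D2 phi alpha -> @reduction D2 D3 psi beta ->
  reduction (psi \o phi) (beta \o alpha).
Proof.
move=> red12 red23 pi Dpi; have [D2api AB] := red12 pi Dpi.
by have [D3bapi BC] := red23 _ D2api; split=> // x y /BC /AB.
Qed.

Lemma reducible_trans : reducible D1 D2 -> reducible D2 D3 -> reducible D1 D3.
Proof.
move=> /reducibleP [phi [alpha red12]] /reducibleP [psi [beta red23]].
by apply/reducibleP; exists (psi \o phi), (beta \o alpha); apply: reduction_comp.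
Qed.

End Reductions.

Lemma reduction_iter (D : ASD) phi alpha k :
  @reduction D D phi alpha -> reduction (iter k phi) (iter k alpha).
Proof.
move=> red; elim: k => [|k IHk]; first exact: reduction_id.
exact: reduction_comp IHk red.
Qed.

Lemma asd_equiv_refl (D : ASD) : asd_equiv D D.
Proof. by split; apply/reducibleP; exists id, id; apply: reduction_id. Qed.

Lemma asd_equiv_trans (D1 D2 D3 : ASD) :
  asd_equiv D1 D2 -> asd_equiv D2 D3 -> asd_equiv D1 D3.
Proof. by move=> [r12 r21] [r23 r32]; split; apply: reducible_trans; eassumption. Qed.

Definition separating (D : ASD) : Prop :=
  forall s s' : states D, s != s' -> exists2 pi, pi \in parts D & ~~ same_block pi s s'.

Lemma separating_reduction_inj (D D' : ASD) phi alpha :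
  separating D -> @reduction D D' phi alpha -> injective phi.
Proof.
move=> sepD red s s' eq_phi; apply/eqP; apply: contraT => /sepD [pi Dpi /negP []].
have [D'api AB] := red pi Dpi; apply: AB.
by rewrite eq_phi same_block_refl // parts_partition.
Qed.

Lemma separating_state_minimal (D : ASD) : separating D -> state_minimal D.
Proof.
move=> sepD [D' [[_ /reducibleP [phi [alpha red]]] ltD'D]].
by have := leq_card _ (separating_reduction_inj sepD red); rewrite leqNgt ltD'D.
Qed.

Section MergeStates.
Variables (D : ASD) (s s' : states D).
Hypothesis neq_ss' : s != s'.
Hypothesis same_ss' : forall pi, pi \in parts D -> same_block pi s s'.

Definition merged_states := {x : states D | x != s'}.

Definition merged_parts : {set {set {set merged_states}}} :=
  [set pullback pi val | pi in parts D].

Lemma merged_parts_partition pi :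
  pi \in merged_parts -> partition pi [set: merged_states].
Proof. by case/imsetP => pi0 Dpi0 ->; apply/pullback_partition/parts_partition. Qed.

Definition merged_asd := mkASD merged_parts_partition.

Definition merge (x : states D) : merged_states := insubd (exist _ s neq_ss') x.

Lemma merge_val x : val (merge x) = if x == s' then s else x.
Proof.
rewrite /merge /insubd; case: insubP => /= [y neq_xs' -> | ]; first by rewrite (negbTE neq_xs').
by rewrite negbK => /eqP ->; rewrite eqxx.
Qed.

Lemma pblock_merge pi x : pi \in parts D -> pblock pi (val (merge x)) = pblock pi x.
Proof.
move=> Dpi; rewrite merge_val; case: eqP => [-> | //].
by apply/eqP; rewrite -same_block_pblock ?parts_partition ?same_ss'.
Qed.

Lemma merged_asd_equiv : asd_equiv merged_asd D.
Proof.
split; apply/reducibleP.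
  exists val, (fun rho => odflt set0 [pick pi in parts D | rho == pullback pi val]).
  move=> _ /imsetP [pi0 Dpi0 ->]; case: pickP => [pi /andP [Dpi /eqP ->] | none] /=.
    by split=> // x y; rewrite same_block_pullback // parts_partition.
  by have := none pi0; rewrite Dpi0 eqxx.
exists merge, (fun pi => pullback pi val) => pi Dpi; have partD := parts_partition Dpi.
split=> [|x y]; first exact: imset_f.
by rewrite same_block_pullback // !same_block_pblock // !pblock_merge.
Qed.

Lemma card_merged_states : #|states merged_asd| < #|states D|.
Proof.
rewrite /= card_sig (cardD1 s') inE /= add1n ltnS subset_leq_card //.
by apply/subsetP => x; rewrite !inE andbT.
Qed.

End MergeStates.

Lemma state_minimal_separating (D : ASD) : state_minimal D -> separating D.
Proof.
move=> minD s s' neq_ss'; case: (boolP [exists pi in parts D, ~~ same_block pi s s']).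
  by case/exists_inP => pi; exists pi.
move=> /exists_inPn same_ss'; case: minD; exists (merged_asd s'); split.
  by apply: (merged_asd_equiv neq_ss') => pi /same_ss' /negbNE.
exact: card_merged_states.
Qed.

Lemma state_minimalP (D : ASD) : state_minimal D <-> separating D.
Proof. by split; [apply: state_minimal_separating | apply: separating_state_minimal]. Qed.

Lemma meet_family_eq_id (T : finType) (P : {set {set {set T}}}) :
  (forall pi, pi \in P -> partition pi [set: T]) ->
  meet_family P = id_part T <->
  (forall x y, [forall pi in P, same_block pi x y] -> x = y).
Proof.
move=> partP; have sameP x : [forall pi in P, same_block pi x x].
  by apply/forall_inP => pi /partP /same_block_refl.
split=> [meetP x y xy | sepP].
  have : [set z | [forall pi in P, same_block pi x z]] \in id_part T.
    by rewrite -meetP; apply: imset_f.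
  case/imsetP => z _ blockx.
  have block_z w : [forall pi in P, same_block pi x w] -> w = z.
    by move=> xw; apply/set1P; rewrite -blockx inE.
  by rewrite (block_z y xy) (block_z x (sameP x)).
apply: eq_imset => x; apply/setP => y; rewrite !inE.
by apply/idP/eqP => [/sepP -> | ->].
Qed.

Lemma separating_meet_family (D : ASD) :
  separating D <-> meet_family (parts D) = id_part (states D).
Proof.
apply: (iff_trans _ (iff_sym (meet_family_eq_id (@parts_partition D)))).
split=> [sepD x y | sepD s s' neq_ss'].
  by apply: contraTeq => /sepD [pi Dpi xy]; apply/forall_inPn; exists pi.
by apply/forall_inPn; apply: contra neq_ss' => /sepD ->.
Qed.

Section RemoveCoarser.
Variables (D : ASD) (pi pi' : {set {set states D}}).
Hypotheses (Dpi : pi \in parts D) (Dpi' : pi' \in parts D).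
Hypotheses (neq_pi : pi != pi') (pi_refines : refines pi pi').

Definition removed_parts := parts D :\ pi'.

Lemma removed_parts_partition rho :
  rho \in removed_parts -> partition rho [set: states D].
Proof. by case/setD1P => _ /parts_partition. Qed.

Definition removed_asd := mkASD removed_parts_partition.

Lemma removed_asd_equiv : asd_equiv removed_asd D.
Proof.
split; apply/reducibleP.
  by exists id, id => rho /setD1P [_ Drho]; split.
exists id, (fun rho => if rho == pi' then pi else rho) => rho Drho.
case: eqP => [-> | /eqP neq_rho]; last by split=> //; apply/setD1P.
split; first exact/setD1P.
exact: refines_same_block.
Qed.

Lemma card_removed_parts : #|parts removed_asd| < #|parts D|.
Proof. by rewrite /= /removed_parts (cardsD1 pi' (parts D)) Dpi'. Qed.

End RemoveCoarser.

Lemma partition_minimal_antichain (D : ASD) : partition_minimal D -> antichain (parts D).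
Proof.
move=> minD pi pi' Dpi Dpi' pi_refines; apply/eqP; apply: contraT => neq_pi.
case: minD; exists (removed_asd pi'); split.
  exact: (removed_asd_equiv Dpi).
exact: card_removed_parts.
Qed.

Lemma antichain_idempotent_reduction (D : ASD) f g :
  antichain (parts D) -> @reduction D D f g ->
  idempotent_fun f -> idempotent_fun g -> {in parts D, g =1 id}.
Proof.
move=> acD red idem_f idem_g pi Dpi; have [Dgpi red_pi] := red pi Dpi.
have [_ red_gpi] := red _ Dgpi; have partg := parts_partition Dgpi.
(* Since g (g pi) = g pi and f (f x) = f x, every x shares a block of g pi with
   f x; hence g pi refines pi. *)
have pblock_f x : pblock (g pi) (f x) = pblock (g pi) x.
  apply/esym/eqP; rewrite -same_block_pblock //; apply: red_gpi.
  by rewrite [g (g pi)]idem_g [f (f x)]idem_f same_block_refl.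
apply: acD => //; apply/refines_same_blockP; rewrite ?parts_partition // => x y gxy.
by apply: red_pi; rewrite same_block_pblock // !pblock_f -same_block_pblock.
Qed.

Lemma antichain_reduction_inj (D D' : ASD) phi alpha psi beta :
  antichain (parts D) -> @reduction D D' phi alpha -> @reduction D' D psi beta ->
  {in parts D &, injective alpha}.
Proof.
move=> acD red red'; have red_round := reduction_comp red red'.
have [kf kf_gt0 idem_f] := exists_idempotent_iter (psi \o phi).
have [kg kg_gt0 idem_g] := exists_idempotent_iter (beta \o alpha).
have idem_fk : idempotent_fun (iter (kf * kg) (psi \o phi)).
  by rewrite mulnC; apply: idempotent_iter_mul.
have fixed := antichain_idempotent_reduction acD (reduction_iter (kf * kg) red_round)
  idem_fk (idempotent_iter_mul idem_g kf_gt0).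
move=> pi1 pi2 Dpi1 Dpi2 eq_alpha; rewrite -(fixed pi1) // -(fixed pi2) //.
have : 0 < kf * kg by rewrite muln_gt0 kf_gt0.
by case: (kf * kg) => // k _; rewrite !iterSr /= eq_alpha.
Qed.

Lemma antichain_partition_minimal (D : ASD) : antichain (parts D) -> partition_minimal D.
Proof.
move=> acD [D' [[/reducibleP [psi [beta red']] /reducibleP [phi [alpha red]]] ltD'D]].
have : #|alpha @: parts D| <= #|parts D'|.
  by apply/subset_leq_card/subsetP => _ /imsetP [pi Dpi ->]; case: (red pi Dpi).
rewrite card_in_imset; last exact: antichain_reduction_inj red red'.
by rewrite leqNgt ltD'D.
Qed.

Lemma partition_minimalP (D : ASD) : partition_minimal D <-> antichain (parts D).
Proof.
by split; [apply: partition_minimal_antichain | apply: antichain_partition_minimal].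
Qed.

Lemma exists_minimal_equiv (D : ASD) : exists D', minimal D' /\ asd_equiv D' D.
Proof.
have [D1 [eqD1 minD1]] := exists_minimizer (fun D' => #|states D'|)
  (ex_intro (fun D' => asd_equiv D' D) D (asd_equiv_refl D)).
have [D2 [[eqD2 cardD2] minD2]] := exists_minimizer (fun D' => #|parts D'|)
  (ex_intro (fun D' => asd_equiv D' D /\ #|states D'| = #|states D1|) D1 (conj eqD1 erefl)).
exists D2; split=> //; split.
  move=> [D3 [eqD3 ltD3]]; have := minD1 D3 (asd_equiv_trans eqD3 eqD2).
  by rewrite -cardD2 leqNgt ltD3.
apply/partition_minimalP => pi pi' Dpi Dpi' pi_refines; apply/eqP; apply: contraT => neq_pi.
have := minD2 (removed_asd pi'); rewrite leqNgt card_removed_parts //=; apply.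
by split=> //; apply: (asd_equiv_trans _ eqD2); apply: (removed_asd_equiv Dpi).
Qed.

Theorem theorem1 :
  forall D : ASD,
    ((state_minimal D <->
        (forall s s' : states D, s != s' ->
           exists2 pi, pi \in parts D & ~~ same_block pi s s'))
     /\ (state_minimal D <-> meet_family (parts D) = id_part (states D)))
    /\ (partition_minimal D <-> antichain (parts D))
    /\ (exists D' : ASD, minimal D' /\ asd_equiv D' D).
Proof.
move=> D; split; last by split; [apply: partition_minimalP | apply: exists_minimal_equiv].
split; first exact: state_minimalP.
exact: iff_trans (state_minimalP D) (separating_meet_family D).
Qed.
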